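(* Let $(Q_t)_{t\ge0}$ be the semigroup of the Bessel-3 process, i.e. for $x>0$, $t>0$ and measurable $f$, $$Q_t f(x) = \int_0^\infty f(y)\,\frac{2}{\sqrt{2\pi t}}\,\frac{y}{x}\sinh\!\Big(\frac{xy}{t}\Big)e^{-\frac{x^2+y^2}{2t}}\,dy,$$ and for a probability measure $\mu$ on $(0,+\infty)$ write $\mu Q_t f := \int_{(0,\infty)} Q_t f(x)\,\mu(dx)$. Let $\gamma(dx) = x^2\,dx$ on $\mathbb{R}_+$ and $K_t := \frac{t\sqrt{2\pi t}}{2}$. Let $f$ be a measurable function such that $$C_f := \frac12\int_{\mathbb{R}_+}|f(x)|x^2\,dx<\infty \quad\text{and}\quad C'_f := \frac12\int_{\mathbb{R}_+}|f(x)|x^4\,dx<\infty.$$ Then for any $t>0$ and any probability measure $\mu$ supported on $(0,+\infty)$ with $\int_0^\infty x^2\mu(dx)<+\infty$, $$|\gamma(f) - K_t\,\mu Q_t f| \le \frac{C_f\int_0^\infty x^2\mu(dx) + C'_f}{t}.$$ If moreover $f$ is positive, then $$t\,\big(\gamma(f) - K_t\,\mu Q_t f\big) \xrightarrow[t\to\infty]{} \int_0^\infty\int_0^\infty f(y)\,\frac{y^2(x^2+y^2)}{2}\,dy\,\mu(dx).$$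
   Context: The Bessel-3 process is the diffusion $dY_t = dB_t + \frac{1}{Y_t}dt$; the displayed formula is the density of its transition kernel. *)

From HB Require Import structures.
From mathcomp Require Import all_boot all_order all_algebra.
From mathcomp Require Import all_classical all_reals all_analysis.
Set Implicit Arguments. Unset Strict Implicit. Unset Printing Implicit Defensive.
Import Order.TTheory GRing.Theory Num.Theory.
Import numFieldNormedType.Exports.
Local Open Scope classical_set_scope.
Local Open Scope ring_scope.

Section Bessel3.
Variable R : realType.

Definition sinhR (z : R) : R := (expR z - expR (- z)) / 2.

Definition bes3_density (t x y : R) : R :=
  2 / Num.sqrt (2 * pi * t) * (y / x) * sinhR (x * y / t)
    * expR (- (x ^+ 2 + y ^+ 2) / (2 * t)).

Definition Qt (t : R) (f : R -> R) (x : R) : R :=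
  Rintegral lebesgue_measure `]0, +oo[ (fun y => f y * bes3_density t x y).

Definition muQt (mu : probability R R) (t : R) (f : R -> R) : R :=
  Rintegral mu `]0, +oo[ (Qt t f).

Definition gammaR (f : R -> R) : R :=
  Rintegral lebesgue_measure `[0, +oo[ (fun x => f x * x ^+ 2).

Definition Kt (t : R) : R := t * Num.sqrt (2 * pi * t) / 2.

Definition Cf (f : R -> R) : R :=
  2^-1 * Rintegral lebesgue_measure `[0, +oo[ (fun x => `|f x| * x ^+ 2).

Definition Cf' (f : R -> R) : R :=
  2^-1 * Rintegral lebesgue_measure `[0, +oo[ (fun x => `|f x| * x ^+ 4).

End Bessel3.

From HB Require Import structures.
From mathcomp Require Import all_boot all_order all_algebra.
From mathcomp Require Import all_classical all_reals all_analysis.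
From mathcomp Require Import ring lra measurable_realfun.
Import Order.TTheory GRing.Theory Num.Theory.
Import numFieldNormedType.Exports.
Local Open Scope classical_set_scope.
Local Open Scope ring_scope.
Set Implicit Arguments.
Unset Strict Implicit.
Unset Printing Implicit Defensive.

(* With a = (x - y)^2 / 2t and b = (x + y)^2 / 2t one has
   K_t q_t(x, y) = (t y / 2x) (e^-a - e^-b), so the defect y^2 - K_t q_t(x, y)
   is (t y / 2x) (r1(-b) - r1(-a)), where rn is the remainder of order n of the
   Taylor expansion of exp at 0. As b^2 - a^2 = 2xy (x^2 + y^2) / t^2, the
   second-order part of this difference is y^2 (x^2 + y^2) / 2t, and the
   monotonicity of r1 and r2 and the sign of r3 on ]-oo, 0] give
     0 <= y^2 - K_t q_t(x, y) <= y^2 (x^2 + y^2) / 2t,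
     t (y^2 - K_t q_t(x, y)) = y^2 (x^2 + y^2) / 2 + O(1/t).
   Integrating f(y) times the defect against dy mu(dx) yields the bound, and
   dominated convergence, first in y and then in x, yields the limit. *)

Section expR_remainders.
Context {R : realType}.
Implicit Types a b v : R.

Lemma ger0_is_derive_ler (f df : R -> R) a b :
  (forall x, is_derive x (1 : R) f (df x)) ->
  (forall c, a <= c <= b -> 0 <= df c) -> a <= b -> f a <= f b.
Proof.
move=> fdf df_ge0 ab.
have cf : {within `[a, b], continuous f}.
  by apply: derivable_within_continuous => x _; case: (fdf x).
have [c /[!in_itv]/= acb fE] := MVT_segment ab (fun x _ => fdf x) cf.
by rewrite -subr_ge0 fE mulr_ge0 ?df_ge0 ?subr_ge0.
Qed.

Definition expR_rem1 v := expR v - 1 - v.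
Definition expR_rem2 v := expR_rem1 v - v ^+ 2 / 2.
Definition expR_rem3 v := expR_rem2 v - v ^+ 3 / 6.

Lemma expR_rem1_nincr a b : a <= b -> b <= 0 -> expR_rem1 b <= expR_rem1 a.
Proof.
move=> ab b_le0; rewrite -lerN2.
apply: (@ger0_is_derive_ler (fun c => - expR_rem1 c) (fun v => 1 - expR v)) => // [x|c /andP[_ cb]].
  by rewrite /expR_rem1; apply: is_derive_eq; rewrite /GRing.scale /=; field.
by rewrite subr_ge0 -expR0 ler_expR (le_trans cb).
Qed.

Lemma expR_rem2_ndecr : {homo expR_rem2 : a b / a <= b}.
Proof.
move=> a b; apply: (@ger0_is_derive_ler _ expR_rem1) => [x|c _].
  by rewrite /expR_rem2 /expR_rem1; apply: is_derive_eq; rewrite /GRing.scale /=; field.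
by have := expR_ge1Dx c; rewrite /expR_rem1; lra.
Qed.

Lemma expR_rem2_le0 v : v <= 0 -> expR_rem2 v <= 0.
Proof.
have rem2_0 : expR_rem2 0 = 0 by rewrite /expR_rem2 /expR_rem1 expR0; ring.
by move=> v_le0; rewrite -[leRHS]rem2_0 expR_rem2_ndecr.
Qed.

Lemma expR_rem3_ge0 v : v <= 0 -> 0 <= expR_rem3 v.
Proof.
have rem3_0 : expR_rem3 0 = 0 by rewrite /expR_rem3 /expR_rem2 /expR_rem1 expR0; ring.
move=> v_le0; rewrite -[leLHS]rem3_0 -lerN2.
apply: (@ger0_is_derive_ler (fun c => - expR_rem3 c) (fun c => - expR_rem2 c)) => // [x|c /andP[_ c_le0]].
  by rewrite /expR_rem3 /expR_rem2 /expR_rem1; apply: is_derive_eq; rewrite /GRing.scale /=; field.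
by rewrite oppr_ge0 expR_rem2_le0.
Qed.

Lemma expR_rem2N_bounds (u : R) : 0 <= u -> - (u ^+ 3 / 6) <= expR_rem2 (- u) <= 0.
Proof.
move=> u_ge0; have u_le0 : - u <= 0 by rewrite oppr_le0.
have := expR_rem3_ge0 u_le0; rewrite expR_rem2_le0 // andbT /expR_rem3.
have -> : (- u) ^+ 3 = - u ^+ 3 by ring.
lra.
Qed.

End expR_remainders.

Lemma measurable_inv (R : realType) : measurable_fun [set: R] GRing.inv.
Proof.
(* [inv] is continuous off 0, and [0^-1 = 0] is handled separately. *)
have -> : GRing.inv = (fun x : R => if x == 0 then 0 else x^-1).
  by apply/funext => x; case: eqP => // ->; rewrite invr0.
apply: measurable_fun_ifT => //; first exact: measurable_fun_eqr.
rewrite -(setvU [set 0]).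
have open_neq0 : open (~` [set 0] : set R).
  by apply: closed_openC; apply: compact_closed; [exact: Rhausdorff|exact: compact_set1].
apply/measurable_funU => //; first exact: open_measurable.
split; last exact: measurable_fun_set1.
apply: open_continuous_measurable_fun => // x.
by rewrite inE => /eqP; exact: inv_continuous.
Qed.

Lemma measurable_partial_Rintegral d1 d2 (T1 : measurableType d1) (T2 : measurableType d2)
    (R : realType) (m2 : {sigma_finite_measure set T2 -> \bar R}) (F : T1 * T2 -> R) :
  measurable_fun setT F -> measurable_fun setT (fun x => \int[m2]_y F (x, y)).
Proof.
move=> mF; have mEF : measurable_fun setT (EFin \o F) by exact/measurable_EFinP.
apply: measurableT_comp => //.
rewrite (_ : (fun x => _) =
    (fun x => fubini_F m2 (EFin \o F)^\+ x - fubini_F m2 (EFin \o F)^\- x)%E).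
  apply: emeasurable_funB; apply: measurable_fun_fubini_tonelli_F => //.
    exact: measurable_funepos.
  exact: measurable_funeneg.
apply/funext => x; rewrite integralE /fubini_F.
by congr (_ - _)%E; apply: eq_integral => y _; rewrite ?funeposE ?funenegE.
Qed.

Lemma cvgy_dist_le_div (R : realType) (u : R -> R) (l K : R) :
  (forall t, 0 < t -> `|u t - l| <= K / t) -> u t @[t --> +oo] --> l.
Proof.
move=> u_le; apply/cvgrPdist_le => e e_gt0; near=> t.
have t_gt0 : 0 < t by near: t; exact: nbhs_pinfty_gt.
have Ke_le : K / e <= t by near: t; apply: nbhs_pinfty_ge; exact: num_real.
by rewrite distrC (le_trans (u_le _ t_gt0)) // ler_pdivrMr // mulrC -ler_pdivrMr.
Unshelve. all: by end_near.
Qed.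

Section dominated_convergence_pinfty.
Context d (T : measurableType d) (R : realType) (mu : {measure set T -> \bar R}).
Variables (D : set T) (F : R -> T -> R) (g h : T -> R).
Hypotheses (mD : measurable D) (mF : forall t, 0 < t -> measurable_fun D (F t)).
Hypothesis F_cvg : forall x, D x -> F t x @[t --> +oo] --> g x.
Hypotheses (ih : mu.-integrable D (EFin \o h))
  (F_le : forall t x, 0 < t -> D x -> `|F t x| <= h x).

Lemma cvgy_Rintegral_dominated :
  \int[mu]_(x in D) F t x @[t --> +oo] --> \int[mu]_(x in D) g x.
Proof.
apply/cvg_pinftyP => u /cvgryPge u_ge; pose v n := Num.max (u n) 1.
have v_gt0 n : 0 < v n by rewrite lt_max ltr01 orbT.
have v_cvg : v n @[n --> \oo] --> +oo.
  by apply/cvgryPge => M; apply: filterS (u_ge M) => n; rewrite le_max => ->.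
have Fv_cvg x : D x -> F (v n) x @[n --> \oo] --> g x.
  by move=> Dx; apply: cvg_comp v_cvg (F_cvg Dx).
have mg : measurable_fun D g.
  by apply: (measurable_fun_cvg (h := fun n => F (v n))) Fv_cvg => n; exact: mF.
have mEFv n : measurable_fun D (EFin \o F (v n)).
  by apply/measurable_EFinP; exact: mF.
have EFv_ae_cvg : \forall x \ae mu, D x -> (EFin \o F (v n)) x @[n --> \oo] --> (EFin \o g) x.
  by apply: aeW => x Dx; apply: cvg_EFin; [exact: nearW|exact: Fv_cvg].
have EFv_ae_le : \forall x \ae mu, forall n, D x -> (`|(EFin \o F (v n)) x| <= (EFin \o h) x)%E.
  by apply: aeW => x n Dx; rewrite lee_fin F_le.
have [ig_fin _ EFv_cvg] := dominated_convergence mD mEFv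
  ((measurable_EFinP _ _).2 mg) EFv_ae_cvg ih EFv_ae_le.
rewrite -(fineK (integrable_fin_num mD ig_fin)) in EFv_cvg.
apply: cvg_trans (fine_cvg EFv_cvg); apply: near_eq_cvg.
near=> n; rewrite /= /v max_l //.
by near: n; exact: u_ge.
Unshelve. all: by end_near.
Qed.

End dominated_convergence_pinfty.

Section bes3_gap.
Context {R : realType}.
Implicit Types t x y : R.

Lemma Kt_gt0 t : 0 < t -> 0 < Kt t.
Proof. by move=> t_gt0; rewrite /Kt divr_gt0 // mulr_gt0 // sqrtr_gt0 !mulr_gt0 ?pi_gt0. Qed.

Lemma Kt_bes3_densityE t x y : 0 < t -> 0 < x ->
  Kt t * bes3_density t x y =
  t * y / (2 * x) *
    (expR (- ((x - y) ^+ 2 / (2 * t))) - expR (- ((x + y) ^+ 2 / (2 * t)))).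
Proof.
move=> t_gt0 x_gt0.
have sqrt_gt0 : 0 < Num.sqrt (2 * pi * t) by rewrite sqrtr_gt0 !mulr_gt0 ?pi_gt0.
have expRDl : expR (x * y / t) * expR (- (x ^+ 2 + y ^+ 2) / (2 * t)) =
              expR (- ((x - y) ^+ 2 / (2 * t))).
  by rewrite -expRD; congr expR; field; rewrite gt_eqF.
have expRDr : expR (- (x * y / t)) * expR (- (x ^+ 2 + y ^+ 2) / (2 * t)) =
              expR (- ((x + y) ^+ 2 / (2 * t))).
  by rewrite -expRD; congr expR; field; rewrite gt_eqF.
by rewrite /Kt /bes3_density /sinhR -expRDl -expRDr; field; rewrite !gt_eqF.
Qed.

Definition bes3_gap t x y := y ^+ 2 - Kt t * bes3_density t x y.

Lemma bes3_gap_expR_rem1 t x y : 0 < t -> 0 < x ->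
  bes3_gap t x y = t * y / (2 * x) *
    (expR_rem1 (- ((x + y) ^+ 2 / (2 * t))) - expR_rem1 (- ((x - y) ^+ 2 / (2 * t)))).
Proof.
by move=> t_gt0 x_gt0; rewrite /bes3_gap Kt_bes3_densityE // /expR_rem1; field; rewrite !gt_eqF.
Qed.

Lemma bes3_gap_expR_rem2 t x y : 0 < t -> 0 < x ->
  bes3_gap t x y = y ^+ 2 * (x ^+ 2 + y ^+ 2) / (2 * t) + t * y / (2 * x) *
    (expR_rem2 (- ((x + y) ^+ 2 / (2 * t))) - expR_rem2 (- ((x - y) ^+ 2 / (2 * t)))).
Proof.
move=> t_gt0 x_gt0; rewrite bes3_gap_expR_rem1 // /expR_rem2.
by field; rewrite !gt_eqF.
Qed.

Let sqrBdiv_le_sqrDdiv t x y : 0 < t -> 0 <= x -> 0 <= y ->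
  (x - y) ^+ 2 / (2 * t) <= (x + y) ^+ 2 / (2 * t).
Proof.
move=> t_gt0 x_ge0 y_ge0; rewrite ler_pM2r ?invr_gt0 ?mulr_gt0 //.
by rewrite -subr_ge0 (_ : _ - _ = 4 * (x * y)) ?mulr_ge0 //; ring.
Qed.

Lemma bes3_gap_ge0 t x y : 0 < t -> 0 < x -> 0 <= y -> 0 <= bes3_gap t x y.
Proof.
move=> t_gt0 x_gt0 y_ge0; rewrite bes3_gap_expR_rem1 //.
rewrite mulr_ge0 ?divr_ge0 ?mulr_ge0 ?(ltW t_gt0) ?(ltW x_gt0) // subr_ge0.
by rewrite expR_rem1_nincr ?lerN2 ?sqrBdiv_le_sqrDdiv ?(ltW x_gt0) // oppr_le0 divr_ge0 ?sqr_ge0 ?mulr_ge0 ?(ltW t_gt0).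
Qed.

Lemma bes3_gap_le t x y : 0 < t -> 0 < x -> 0 <= y ->
  t * bes3_gap t x y <= y ^+ 2 * (x ^+ 2 + y ^+ 2) / 2.
Proof.
move=> t_gt0 x_gt0 y_ge0; rewrite bes3_gap_expR_rem2 // mulrDr.
have -> : t * (y ^+ 2 * (x ^+ 2 + y ^+ 2) / (2 * t)) = y ^+ 2 * (x ^+ 2 + y ^+ 2) / 2.
  by field; rewrite gt_eqF.
rewrite gerDl !mulr_ge0_le0 ?divr_ge0 ?mulr_ge0 ?(ltW t_gt0) ?(ltW x_gt0) // subr_le0.
by rewrite expR_rem2_ndecr // lerN2 sqrBdiv_le_sqrDdiv ?(ltW x_gt0).
Qed.

Lemma bes3_gap_asymp t x y : 0 < t -> 0 < x -> 0 <= y ->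
  `|t * bes3_gap t x y - y ^+ 2 * (x ^+ 2 + y ^+ 2) / 2|
    <= y * (((x - y) ^+ 2 / 2) ^+ 3 + ((x + y) ^+ 2 / 2) ^+ 3) / (12 * x) / t.
Proof.
move=> t_gt0 x_gt0 y_ge0; rewrite bes3_gap_expR_rem2 //.
set a := (x - y) ^+ 2 / (2 * t); set b := (x + y) ^+ 2 / (2 * t).
have a_ge0 : 0 <= a by rewrite divr_ge0 ?sqr_ge0 ?mulr_ge0 ?(ltW t_gt0).
have b_ge0 : 0 <= b by rewrite divr_ge0 ?sqr_ge0 ?mulr_ge0 ?(ltW t_gt0).
have c_ge0 : 0 <= t * (t * y / (2 * x)).
  by rewrite !mulr_ge0 ?invr_ge0 ?mulr_ge0 ?(ltW t_gt0) ?(ltW x_gt0).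
have -> : t * (y ^+ 2 * (x ^+ 2 + y ^+ 2) / (2 * t) +
            t * y / (2 * x) * (expR_rem2 (- b) - expR_rem2 (- a))) -
          y ^+ 2 * (x ^+ 2 + y ^+ 2) / 2 =
          t * (t * y / (2 * x)) * (expR_rem2 (- b) - expR_rem2 (- a)).
  by field; rewrite !gt_eqF.
have -> : y * (((x - y) ^+ 2 / 2) ^+ 3 + ((x + y) ^+ 2 / 2) ^+ 3) / (12 * x) / t =
          t * (t * y / (2 * x)) * ((a ^+ 3 + b ^+ 3) / 6).
  by rewrite /a /b; field; rewrite !gt_eqF.
rewrite normrM (ger0_norm c_ge0) ler_wpM2l // ler_norml.
have /andP[? ?] := expR_rem2N_bounds a_ge0.
have /andP[? ?] := expR_rem2N_bounds b_ge0.
apply/andP; split; lra.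
Qed.

Lemma measurable_bes3_gap (t : R) :
  measurable_fun setT (fun p : R * R => bes3_gap t p.1 p.2).
Proof.
rewrite /bes3_gap /bes3_density /sinhR.
repeat first
  [ exact: measurable_cst | exact: measurable_fst | exact: measurable_snd
  | apply: measurable_funD | apply: measurable_funB | apply: measurable_funM
  | apply: measurable_funN | apply: measurable_funX
  | (apply: measurableT_comp; first exact: measurable_expR)
  | (apply: measurableT_comp; first exact: measurable_inv) ].
Qed.

End bes3_gap.

Section bes3_gap_integral.
Context {R : realType}.
Local Notation leb := (@lebesgue_measure R).
Local Notation I := (`]0, +oo[%classic : set R).
Implicit Types t x y : R.
Variable f : R -> R.
Hypothesis mf : measurable_fun setT f.
Hypothesis if2 : leb.-integrable `[0, +oo[ (fun x => (`|f x| * x ^+ 2)%:E).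
Hypothesis if4 : leb.-integrable `[0, +oo[ (fun x => (`|f x| * x ^+ 4)%:E).

Let itvoy_sub_itvcy : I `<=` `[0, +oo[.
Proof. by apply: subset_itvr; rewrite bnd_simp. Qed.

Let itvoy_gt0 y : I y -> 0 < y.
Proof. by rewrite /= in_itv /= andbT. Qed.

Let mfI : measurable_fun I f.
Proof. exact: measurable_funS mf. Qed.

Let if2I : leb.-integrable I (EFin \o (fun y => `|f y| * y ^+ 2)).
Proof. exact: integrableS if2. Qed.

Let if4I : leb.-integrable I (EFin \o (fun y => `|f y| * y ^+ 4)).
Proof. exact: integrableS if4. Qed.

Let measurable_bes3_gap_snd t x : measurable_fun I (bes3_gap t x).
Proof. exact: measurable_funS (measurableT_comp (measurable_bes3_gap t) (pair1_measurable x)). Qed.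

Let f2_integrable : leb.-integrable I (EFin \o (fun y => f y * y ^+ 2)).
Proof.
apply: le_integrable if2I => //; first by apply/measurable_EFinP; exact: measurable_funM.
by move=> y _; rewrite /= lee_fin !normrM normr_id.
Qed.

Definition moment2 := Rintegral leb I (fun y => `|f y| * y ^+ 2).
Definition moment4 := Rintegral leb I (fun y => `|f y| * y ^+ 4).

Definition gap_bound (x y : R) := `|f y| * (y ^+ 2 * (x ^+ 2 + y ^+ 2)) / 2.

Let gap_bound_ge0 x y : 0 <= gap_bound x y.
Proof. by rewrite /gap_bound divr_ge0 // mulr_ge0 // mulr_ge0 ?sqr_ge0 // addr_ge0 ?sqr_ge0. Qed.

Let gap_boundE x : gap_bound x =
  (fun y => x ^+ 2 / 2 * (`|f y| * y ^+ 2) + 2^-1 * (`|f y| * y ^+ 4)).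
Proof. by apply/funext => y; rewrite /gap_bound; ring. Qed.

Lemma gap_bound_integrable x : leb.-integrable I (EFin \o gap_bound x).
Proof. by rewrite gap_boundE; exact: (integrableD _ (integrableZl _ _ if2I) (integrableZl _ _ if4I)). Qed.

Lemma Rintegral_gap_bound x :
  Rintegral leb I (gap_bound x) = (x ^+ 2 * moment2 + moment4) / 2.
Proof.
rewrite gap_boundE RintegralD //; last 2 first.
- exact: (integrableZl _ _ if2I).
- exact: (integrableZl _ _ if4I).
by rewrite !RintegralZl // /moment2 /moment4; field.
Qed.

Lemma ler_norm_f_gap t x y : 0 < t -> 0 < x -> 0 < y ->
  `|f y * (t * bes3_gap t x y)| <= gap_bound x y.
Proof.
move=> t_gt0 x_gt0 y_gt0; rewrite /gap_bound normrM -mulrA ler_wpM2l //.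
by rewrite ger0_norm ?mulr_ge0 ?bes3_gap_ge0 ?bes3_gap_le ?(ltW t_gt0) ?(ltW y_gt0).
Qed.

Definition gap_integral t x := Rintegral leb I (fun y => f y * bes3_gap t x y).

Lemma f_gap_integrable t x : 0 < t -> 0 < x ->
  leb.-integrable I (EFin \o (fun y => f y * bes3_gap t x y)).
Proof.
move=> t_gt0 x_gt0; apply: le_integrable (integrableZl _ t^-1 (gap_bound_integrable x)) => //.
  by apply/measurable_EFinP/measurable_funM => //; exact: measurable_bes3_gap_snd.
move=> y /itvoy_gt0 y_gt0.
rewrite lee_fin [leRHS]ger0_norm; last by rewrite mulr_ge0 ?invr_ge0 ?gap_bound_ge0 ?(ltW t_gt0).
have := ler_norm_f_gap t_gt0 x_gt0 y_gt0.
by rewrite mulrCA normrM gtr0_norm // -ler_pdivlMl.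
Qed.

Lemma gammaR_itvoy : gammaR f = Rintegral leb I (fun y => f y * y ^+ 2).
Proof. by rewrite /gammaR -Rintegral_itv_obnd_cbnd. Qed.

Lemma gap_integralE t x : 0 < t -> 0 < x ->
  gammaR f - Kt t * Qt t f x = gap_integral t x.
Proof.
move=> t_gt0 x_gt0; have Kt_neq0 : Kt t != 0 by rewrite gt_eqF ?Kt_gt0.
have f_density_integrable :
    leb.-integrable I (EFin \o (fun y => f y * bes3_density t x y)).
  apply: eq_integrable (integrableZl _ (Kt t)^-1
    (integrableB _ f2_integrable (f_gap_integrable t_gt0 x_gt0))) => // y _.
  by rewrite /= /bes3_gap; congr EFin; field.
rewrite /Qt -RintegralZl // gammaR_itvoy -RintegralB //; last first.
  exact: (integrableZl _ _ f_density_integrable).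
by apply: eq_Rintegral => y _; rewrite /bes3_gap; ring.
Qed.

Lemma measurable_gap_integral t : measurable_fun I (gap_integral t).
Proof.
pose F (p : R * R) := f p.2 * bes3_gap t p.1 p.2 * \1_I p.2.
have mF : measurable_fun setT F.
  apply: measurable_funM; last first.
    by apply: measurableT_comp measurable_snd; exact/measurable_indicP.
  apply: measurable_funM; last exact: measurable_bes3_gap.
  exact: measurableT_comp mf measurable_snd.
have -> : gap_integral t = fun x => Rintegral leb setT (fun y => F (x, y)).
  by apply/funext => x; rewrite /gap_integral Rintegral_mkcond patch_indic.
exact: (measurable_funS measurableT (subsetT I) (measurable_partial_Rintegral leb mF)).
Qed.

Lemma ler_norm_gap_integral t x : 0 < t -> 0 < x ->
  `|t * gap_integral t x| <= (x ^+ 2 * moment2 + moment4) / 2.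
Proof.
move=> t_gt0 x_gt0; have igap := f_gap_integrable t_gt0 x_gt0.
rewrite -Rintegral_gap_bound -RintegralZl //.
apply: le_trans (le_normr_Rintegral _ (integrableZl _ t igap)) _ => //.
apply: le_Rintegral => //.
- exact: integrable_norm (integrableZl _ t igap).
- exact: gap_bound_integrable.
move=> y /itvoy_gt0 y_gt0.
by rewrite mulrCA; exact: ler_norm_f_gap.
Qed.

Lemma cvgy_gap_integral x : 0 < x ->
  t * gap_integral t x @[t --> +oo] -->
    Rintegral leb I (fun y => f y * (y ^+ 2 * (x ^+ 2 + y ^+ 2)) / 2).
Proof.
move=> x_gt0.
have gap_integralZ : \forall t \near +oo,
    Rintegral leb I (fun y => f y * (t * bes3_gap t x y)) = t * gap_integral t x.
  near=> t; have t_gt0 : 0 < t by near: t; exact: nbhs_pinfty_gt.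
  rewrite -RintegralZl ?f_gap_integrable //.
  by apply: eq_Rintegral => y _; rewrite mulrCA.
apply: cvg_trans (near_eq_cvg gap_integralZ) _.
apply: cvgy_Rintegral_dominated (gap_bound_integrable x) _ => //.
- move=> t t_gt0; apply: measurable_funM => //.
  by apply: measurable_funM => //; exact: measurable_bes3_gap_snd.
- move=> y /itvoy_gt0 y_gt0.
  apply: (@cvgy_dist_le_div _ _ _ (`|f y| * (y * (((x - y) ^+ 2 / 2) ^+ 3 +
    ((x + y) ^+ 2 / 2) ^+ 3) / (12 * x)))) => t t_gt0.
  rewrite -[f y * _ / 2]mulrA -mulrBr normrM -[leRHS]mulrA ler_wpM2l //.
  exact: bes3_gap_asymp (ltW y_gt0).
- move=> t y t_gt0 /itvoy_gt0 y_gt0; exact: ler_norm_f_gap.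
Unshelve. all: by end_near.
Qed.

Lemma ler_norm_gap_integral_div t x : 0 < t -> 0 < x ->
  `|gap_integral t x| <= t^-1 * ((x ^+ 2 * moment2 + moment4) / 2).
Proof.
move=> t_gt0 x_gt0; have := ler_norm_gap_integral t_gt0 x_gt0.
by rewrite normrM gtr0_norm // -ler_pdivlMl.
Qed.

Lemma CfE : Cf f = moment2 / 2.
Proof. by rewrite /Cf /moment2 -Rintegral_itv_obnd_cbnd // mulrC. Qed.

Lemma Cf'E : Cf' f = moment4 / 2.
Proof. by rewrite /Cf' /moment4 -Rintegral_itv_obnd_cbnd // mulrC. Qed.

Section initial_law.
Variable mu : probability R R.
Hypothesis mu_itvNy0 : mu [set` `]-oo, 0%R]] = 0%E.
Hypothesis mu_integrable_x2 : mu.-integrable I (fun x => (x ^+ 2)%:E).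

Let mu_itvoy : mu I = 1%E.
Proof. by rewrite -setCitvl probability_setC // mu_itvNy0 sube0. Qed.

Let Rintegral_mu_cst (c : R) : Rintegral mu I (fun=> c) = c.
Proof. by rewrite Rintegral_cst //= mu_itvoy mulr1. Qed.

Let bound_ge0 x : 0 <= (x ^+ 2 * moment2 + moment4) / 2.
Proof.
have moment2_ge0 : 0 <= moment2 by apply: Rintegral_ge0 => y _; rewrite mulr_ge0 ?sqr_ge0.
have moment4_ge0 : 0 <= moment4.
  by apply: Rintegral_ge0 => y /itvoy_gt0 y_gt0; rewrite mulr_ge0 ?exprn_ge0 ?(ltW y_gt0).
by rewrite divr_ge0 // addr_ge0 // mulr_ge0 ?sqr_ge0.
Qed.

Let bound_integrable :
  mu.-integrable I (EFin \o (fun x => (x ^+ 2 * moment2 + moment4) / 2)).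
Proof.
apply: eq_integrable (integrableD _ (integrableZl _ (moment2 / 2) mu_integrable_x2)
  (finite_measure_integrable_cst _ (moment4 / 2) (measurable_itv _))) => // x _.
by rewrite /= -EFinM -EFinD; congr EFin; field.
Qed.

Lemma mu_integrable_gap_integral t : 0 < t -> mu.-integrable I (EFin \o gap_integral t).
Proof.
move=> t_gt0; apply: le_integrable (integrableZl _ t^-1 bound_integrable) => //.
  by apply/measurable_EFinP; exact: measurable_gap_integral.
move=> x /itvoy_gt0 x_gt0; rewrite lee_fin [leRHS]ger0_norm; last first.
  by rewrite mulr_ge0 ?invr_ge0 ?bound_ge0 ?(ltW t_gt0).
exact: ler_norm_gap_integral_div.
Qed.

Lemma muQt_gap_integral t : 0 < t ->
  gammaR f - Kt t * muQt mu t f = Rintegral mu I (gap_integral t).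
Proof.
move=> t_gt0; have Kt_neq0 : Kt t != 0 by rewrite gt_eqF ?Kt_gt0.
have Qt_integrable : mu.-integrable I (EFin \o Qt t f).
  apply: eq_integrable (integrableZl _ (Kt t)^-1 (integrableB _
    (finite_measure_integrable_cst _ (gammaR f) (measurable_itv _))
    (mu_integrable_gap_integral t_gt0))) => //.
  move=> x /[!inE] /itvoy_gt0 x_gt0.
  by rewrite /= -gap_integralE //; congr EFin; field.
rewrite /muQt -RintegralZl // -[gammaR f]Rintegral_mu_cst -RintegralB //; last first.
- exact: (integrableZl _ _ Qt_integrable).
- exact: finite_measure_integrable_cst.
by apply: eq_Rintegral => x /[!inE] /itvoy_gt0 x_gt0; rewrite gap_integralE.
Qed.

Let Rintegral_bound : Rintegral mu I (fun x => (x ^+ 2 * moment2 + moment4) / 2) =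
  Cf f * Rintegral mu I (fun x => x ^+ 2) + Cf' f.
Proof.
transitivity (Rintegral mu I (fun x => moment2 / 2 * x ^+ 2 + moment4 / 2)).
  by apply: eq_Rintegral => x _; field.
rewrite RintegralD //; last 2 first.
- exact: (integrableZl _ _ mu_integrable_x2).
- exact: finite_measure_integrable_cst.
by rewrite RintegralZl // Rintegral_mu_cst CfE Cf'E; field.
Qed.

Lemma gammaR_muQt_le t : 0 < t ->
  `|gammaR f - Kt t * muQt mu t f|
    <= (Cf f * Rintegral mu I (fun x => x ^+ 2) + Cf' f) / t.
Proof.
move=> t_gt0; have iG := mu_integrable_gap_integral t_gt0.
rewrite muQt_gap_integral // (le_trans (le_normr_Rintegral _ iG)) //.
rewrite (le_trans (le_Rintegral _ (integrable_norm iG) (integrableZl _ t^-1 bound_integrable) _)) //.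
  by move=> x /itvoy_gt0 x_gt0; exact: ler_norm_gap_integral_div.
by rewrite RintegralZl // Rintegral_bound mulrC.
Qed.

Lemma cvgy_gammaR_muQt :
  t * (gammaR f - Kt t * muQt mu t f) @[t --> +oo] -->
    Rintegral mu I (fun x => Rintegral leb I (fun y => f y * (y ^+ 2 * (x ^+ 2 + y ^+ 2)) / 2)).
Proof.
have muQtZ : \forall t \near +oo,
    Rintegral mu I (fun x => t * gap_integral t x) = t * (gammaR f - Kt t * muQt mu t f).
  near=> t; have t_gt0 : 0 < t by near: t; exact: nbhs_pinfty_gt.
  by rewrite muQt_gap_integral // RintegralZl // mu_integrable_gap_integral.
apply: cvg_trans (near_eq_cvg muQtZ) _.
apply: cvgy_Rintegral_dominated bound_integrable _ => //.
- by move=> t _; apply: measurable_funM => //; exact: measurable_gap_integral.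
- by move=> x /itvoy_gt0; exact: cvgy_gap_integral.
- by move=> t x t_gt0 /itvoy_gt0; exact: ler_norm_gap_integral.
Unshelve. all: by end_near.
Qed.

End initial_law.

End bes3_gap_integral.

Theorem lemma3p2 (R : realType) (f : R -> R) :
  measurable_fun setT f ->
  lebesgue_measure.-integrable `[0, +oo[ (fun x => (`|f x| * x ^+ 2)%:E) ->
  lebesgue_measure.-integrable `[0, +oo[ (fun x => (`|f x| * x ^+ 4)%:E) ->
  (forall (t : R) (mu : probability R R),
      0 < t ->
      mu [set` `]-oo, 0%R]] = 0%E ->
      mu.-integrable `]0, +oo[ (fun x => (x ^+ 2)%:E) ->
      `|gammaR f - Kt t * muQt mu t f|
        <= (Cf f * Rintegral mu `]0, +oo[ (fun x => x ^+ 2) + Cf' f) / t)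
  /\
  ((forall x : R, 0 <= x -> 0 <= f x) ->
   forall mu : probability R R,
      mu [set` `]-oo, 0%R]] = 0%E ->
      mu.-integrable `]0, +oo[ (fun x => (x ^+ 2)%:E) ->
      (t * (gammaR f - Kt t * muQt mu t f)) @[t --> +oo] -->
        Rintegral mu `]0, +oo[ (fun x =>
          Rintegral lebesgue_measure `]0, +oo[
            (fun y => f y * (y ^+ 2 * (x ^+ 2 + y ^+ 2)) / 2))).
Proof.
move=> mf if2 if4; split => [t mu t_gt0 mu0 mu_x2|_ mu mu0 mu_x2].
  exact: gammaR_muQt_le.
exact: cvgy_gammaR_muQt.
Qed.
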